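(* Let $X\in\mathbb{R}^g$ be a random block, let $\{L_B\}_{B\in\overline{\mathcal C}}$ be nonnegative block losses, and let $S,F$ be a measurable partition of the block space with $p=\mathbb{P}(X\in S)$. Let $R_S^\star=\inf_{B}R_S(B)$ and $R_F^\star=\inf_B R_F(B)$. If grids $B_S,B_F\in\overline{\mathcal C}$ and constants $\alpha_S,\alpha_F$ satisfy $R_S(B_S)\le\alpha_S R_S^\star$ and $R_F(B_F)\le\alpha_F R_F^\star$, then $$R_{\mathrm{PO2}}(B_S,B_F)\le\max\{\alpha_S,\alpha_F\}\,R^\star.$$
   Context: Grid space: $\overline{\mathcal C}:=\{B=(b_0,\dots,b_7):0=b_0\le\cdots\le b_7=1\}$. For a block $X=(X_1,\dots,X_g)$ with $M=\max_i|X_i|$, the absmax block loss is $L_B(X)=M^2\frac1g\sum_i\min_j(|X_i|/M-b_j)^2$ (zero if $M=0$). Conditional risks: $R_S(B):=\mathbb{E}[L_B(X)\mid X\in S]$, $R_F(B):=\mathbb{E}[L_B(X)\mid X\in F]$. Two-grid risk: $R_{\mathrm{PO2}}(B_1,B_2):=\mathbb{E}[\min\{L_{B_1}(X),L_{B_2}(X)\}]$. Best single-grid risk: $R^\star:=\inf_{B\in\overline{\mathcal C}}\mathbb{E}L_B(X)=\inf_B\bigl(pR_S(B)+(1-p)R_F(B)\bigr)$. *)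

From HB Require Import structures.
From mathcomp Require Import all_boot all_order all_algebra.
From mathcomp Require Import all_classical all_reals all_analysis.
Set Implicit Arguments. Unset Strict Implicit. Unset Printing Implicit Defensive.
Import Order.TTheory GRing.Theory Num.Theory.
Local Open Scope classical_set_scope.
Local Open Scope ring_scope.

Definition is_grid (R : realType) (B : 'I_8 -> R) : Prop :=
  B ord0 = 0 /\ B ord_max = 1 /\ (forall i j : 'I_8, (i <= j)%N -> B i <= B j).

Definition grids (R : realType) : set ('I_8 -> R) := [set B | is_grid B].

Section risks.
Context {d : measure_display} {T : measurableType d} {R : realType} {g : nat}.
Variables (P : probability T R) (X : T -> g.-tuple R)
          (L : ('I_8 -> R) -> g.-tuple R -> R).

Local Open Scope ereal_scope.

Definition probX (S : set (g.-tuple R)) : R := fine (P (X @^-1` S)).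

Definition risk (B : 'I_8 -> R) : \bar R := \int[P]_x (L B (X x))%:E.

Definition cond_risk (S : set (g.-tuple R)) (B : 'I_8 -> R) : \bar R :=
  (\int[P]_(x in X @^-1` S) (L B (X x))%:E) * ((probX S)^-1)%:E.

Definition cond_risk_star (S : set (g.-tuple R)) : \bar R :=
  ereal_inf (cond_risk S @` @grids R).

Definition risk_star : \bar R := ereal_inf (risk @` @grids R).

Definition risk_PO2 (B1 B2 : 'I_8 -> R) : \bar R :=
  \int[P]_x (Num.min (L B1 (X x)) (L B2 (X x)))%:E.

End risks.

From HB Require Import structures.
From mathcomp Require Import all_boot all_order all_algebra.
From mathcomp Require Import all_classical all_reals all_analysis.
From mathcomp Require Import measurable_realfun lebesgue_integral.
Import Order.TTheory GRing.Theory Num.Theory.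
Local Open Scope classical_set_scope.
Local Open Scope ring_scope.

(** Conditioning on whether [X] falls in [S] or in [F = ~` S] bounds [R^*]
    from below by the mixture [p R_S^* + (1 - p) R_F^*], since a single grid
    has to serve both cells.  The two-grid risk is at most that of the rule
    using [B_S] on [S] and [B_F] on [F], namely [p R_S(B_S) + (1 - p) R_F(B_F)],
    and each of these terms is within its factor [alpha] of the corresponding
    term of the mixture. *)

Section integral_partition.
Local Open Scope ereal_scope.
Context {d} {T : measurableType d} {R : realType}.
Variable mu : {measure set T -> \bar R}.

Lemma ge0_integral_setUC (A : set T) (h : T -> \bar R) :
  measurable A -> measurable_fun setT h -> (forall x, 0 <= h x) ->
  \int[mu]_x h x = \int[mu]_(x in A) h x + \int[mu]_(x in ~` A) h x.
Proof.
move=> mA mh h0; rewrite -(setUv A) ge0_integral_setU ?setUv//.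
- exact: measurableC.
- by rewrite disj_set2E setICr.
Qed.

Lemma ge0_integral_min_le_split (A : set T) (f h : T -> R) :
  measurable A -> measurable_fun setT f -> measurable_fun setT h ->
  (forall x, (0 <= f x)%R) -> (forall x, (0 <= h x)%R) ->
  \int[mu]_x (Num.min (f x) (h x))%:E <=
    \int[mu]_(x in A) (f x)%:E + \int[mu]_(x in ~` A) (h x)%:E.
Proof.
move=> mA mf mh f0 h0.
have mfh : measurable_fun setT (fun x => (Num.min (f x) (h x))%:E).
  by apply/measurable_EFinP; exact: measurable_minr.
have mAC : measurable (~` A) by exact: measurableC.
rewrite (ge0_integral_setUC A _ mA mfh); last first.
  by move=> x; rewrite lee_fin le_min f0 h0.
apply: leeD; apply: ge0_le_integral => //.
- by move=> x _; rewrite lee_fin le_min f0 h0.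
- exact: measurable_funTS.
- by apply: measurable_funTS; exact/measurable_EFinP.
- by move=> x _; rewrite lee_fin ge_min lexx.
- by move=> x _; rewrite lee_fin le_min f0 h0.
- exact: measurable_funTS.
- by apply: measurable_funTS; exact/measurable_EFinP.
- by move=> x _; rewrite lee_fin ge_min lexx orbT.
Qed.

End integral_partition.

Section conditional_risks.
Context {d} {T : measurableType d} {R : realType} {g : nat}
  {P : probability T R} {X : T -> g.-tuple R}
  {L : ('I_8 -> R) -> g.-tuple R -> R}.
Hypothesis mX : measurable_fun setT X.
Hypothesis mL : forall B, is_grid B -> measurable_fun setT (L B).
Hypothesis L0 : forall B, is_grid B -> forall x, 0 <= L B x.

Local Notation p S := (probX P X S).

Lemma measurable_preimageX (S : set (g.-tuple R)) :
  measurable S -> measurable (X @^-1` S).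
Proof. by move=> mS; rewrite -[X @^-1` S]setTI; exact: mX. Qed.

Lemma measurable_lossX B : is_grid B -> measurable_fun setT (L B \o X).
Proof. by move=> gB; exact: measurableT_comp (mL _ gB) mX. Qed.

Lemma probXE S : measurable S -> P (X @^-1` S) = (p S)%:E.
Proof.
move=> mS; rewrite /probX fineK// ge0_fin_numE//.
by rewrite (le_lt_trans (probability_le1 P (measurable_preimageX _ mS))) ?ltry.
Qed.

Lemma probX_setC S : measurable S -> p (~` S) = 1 - p S.
Proof.
move=> mS; rewrite {1}/probX preimage_setC probability_setC.
  by rewrite probXE.
exact: measurable_preimageX.
Qed.

Local Open Scope ereal_scope.

Lemma integral_preimage_cond_risk S B : (p S != 0)%R ->
  \int[P]_(x in X @^-1` S) (L B (X x))%:E = (p S)%:E * cond_risk P X L S B.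
Proof. by move=> pS0; rewrite /cond_risk muleCA -EFinM mulfV ?mule1. Qed.

Lemma cond_risk_star_ge0 S : 0 <= cond_risk_star P X L S.
Proof.
apply/ereal_infP => _ [B gB <-]; apply: mule_ge0.
- by apply: integral_ge0 => x _; rewrite lee_fin L0.
- by rewrite lee_fin invr_ge0 fine_ge0.
Qed.

Section partition.
Context {S : set (g.-tuple R)}.
Hypothesis mS : measurable S.
Hypothesis pS : (0 < p S < 1)%R.

Let pS_gt0 : (0 < p S)%R. Proof. by case/andP: pS. Qed.
Let pSC_gt0 : (0 < 1 - p S)%R. Proof. by case/andP: pS; rewrite subr_gt0. Qed.

Lemma integral_preimageC_cond_risk B :
  \int[P]_(x in ~` (X @^-1` S)) (L B (X x))%:E =
    (1 - p S)%:E * cond_risk P X L (~` S) B.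
Proof.
have -> : ~` (X @^-1` S) = X @^-1` (~` S) by [].
by rewrite integral_preimage_cond_risk probX_setC ?gt_eqF.
Qed.

Lemma risk_split B : is_grid B ->
  risk P X L B =
    (p S)%:E * cond_risk P X L S B + (1 - p S)%:E * cond_risk P X L (~` S) B.
Proof.
move=> gB; rewrite /risk (ge0_integral_setUC P _ _ (measurable_preimageX _ mS)).
- by rewrite integral_preimage_cond_risk ?gt_eqF ?integral_preimageC_cond_risk.
- by apply/measurable_EFinP; exact: measurable_lossX.
- by move=> x; rewrite lee_fin L0.
Qed.

Lemma risk_star_ge_mixture :
  (p S)%:E * cond_risk_star P X L S +
    (1 - p S)%:E * cond_risk_star P X L (~` S) <= risk_star P X L.
Proof.
apply/ereal_infP => _ [B gB <-]; rewrite risk_split//.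
apply: leeD; (apply: lee_wpmul2l; first by rewrite lee_fin ltW);
  by apply: ereal_inf_lbound; exists B.
Qed.

Lemma risk_PO2_le_split B1 B2 : is_grid B1 -> is_grid B2 ->
  risk_PO2 P X L B1 B2 <=
    (p S)%:E * cond_risk P X L S B1 + (1 - p S)%:E * cond_risk P X L (~` S) B2.
Proof.
move=> g1 g2; rewrite -integral_preimage_cond_risk ?gt_eqF//.
rewrite -integral_preimageC_cond_risk.
apply: ge0_integral_min_le_split; first exact: measurable_preimageX.
- exact: measurable_lossX.
- exact: measurable_lossX.
- by move=> x; exact: L0.
- by move=> x; exact: L0.
Qed.

End partition.
End conditional_risks.

Theorem corollary1 (d : measure_display) (T : measurableType d) (R : realType)
  (g : nat) (P : probability T R) (X : T -> g.-tuple R)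
  (L : ('I_8 -> R) -> g.-tuple R -> R)
  (S F : set (g.-tuple R))
  (B_S B_F : 'I_8 -> R) (alpha_S alpha_F : R) :
  measurable_fun setT X ->
  (forall B, is_grid B -> measurable_fun setT (L B)) ->
  (forall B, is_grid B -> forall x, 0 <= L B x) ->
  measurable S -> measurable F -> S `&` F = set0 -> S `|` F = setT ->
  0 < probX P X S < 1 ->
  is_grid B_S -> is_grid B_F ->
  0 <= alpha_S -> 0 <= alpha_F ->
  (cond_risk P X L S B_S <= alpha_S%:E * cond_risk_star P X L S)%E ->
  (cond_risk P X L F B_F <= alpha_F%:E * cond_risk_star P X L F)%E ->
  (risk_PO2 P X L B_S B_F <= (Num.max alpha_S alpha_F)%:E * risk_star P X L)%E.
Proof.
move=> mX mL L0 mS _ SF0 SFT pS gS gF aS0 aF0 hS hF.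
have eF : F = ~` S by rewrite -setTD -SFT setUKD// SF0.
rewrite {}eF in hF.
have [pS_ge0 pSC_ge0] : 0 <= probX P X S /\ 0 <= 1 - probX P X S.
  by case/andP: pS => /ltW-> /ltW; rewrite subr_ge0.
set a := Num.max alpha_S alpha_F.
have weighted_le (c alpha : R) (x y : \bar R) : 0 <= c -> alpha <= a ->
    (0 <= y)%E -> (x <= alpha%:E * y)%E -> (c%:E * x <= a%:E * (c%:E * y))%E.
  move=> c0 alpha_le y0 xy; rewrite muleCA lee_wpmul2l ?lee_fin//.
  by rewrite (le_trans xy)// lee_wpmul2r ?lee_fin.
apply: le_trans (risk_PO2_le_split mX mL L0 mS pS _ _ gS gF) _.
apply: le_trans (lee_wpmul2l _ (risk_star_ge_mixture mX mL L0 mS pS));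
  last by rewrite lee_fin le_max aS0.
rewrite ge0_muleDr ?mule_ge0 ?lee_fin ?cond_risk_star_ge0//.
apply: leeD.
- apply: (weighted_le _ alpha_S) => //; last exact: cond_risk_star_ge0.
  by rewrite le_max lexx.
- apply: (weighted_le _ alpha_F) => //; last exact: cond_risk_star_ge0.
  by rewrite le_max lexx orbT.
Qed.
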